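(* Let $n\ge1$. For every $(x,y,z)\in V_n$: the length of $\tau_n(xyz)\in(V_n)^*$ is $n+1-x$; the first item of $\tau_n(xyz)$ is $(0,x-y+1,n)$ or $(0,x-y+1,n+1)$; and exactly $z-x$ items of $\tau_n(xyz)$ have last coordinate equal to $n$. In particular, $\tau_n$ is injective.
   Context: $V_n=\{(v_0,v_1,v_2)\in\mathbb{Z}^3: 0\le v_0\le v_1\le 1,\ v_1\le v_2\le n+1\}$, elements written as words $v_0v_1v_2$; write $\bar n=n+1$. $\tau_n:V_n\to V_n^*$ (finite sequences over $V_n$) is defined by $\tau_n(xyz)=(0,x-y+1,n)\cdot(11n)^{z-x-1}\cdot(11\bar n)^{n+1-z}$ if $x\ne z$, and $\tau_n(xyz)=(0,x-y+1,n+1)\cdot(11\bar n)^{n-z}$ if $x=z$, where $\cdot$ is concatenation and exponents denote repetition. *)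

From mathcomp Require Import all_boot.
Set Implicit Arguments. Unset Strict Implicit. Unset Printing Implicit Defensive.

Definition word := (nat * nat * nat)%type.

Definition inV (n : nat) (v : word) : bool :=
  let: (v0, v1, v2) := v in [&& v0 <= v1, v1 <= 1, v1 <= v2 & v2 <= n.+1].

(* tau_n(xyz).  The middle coordinate x - y + 1 is written x + 1 - y, which agrees
   with the integer value whenever y <= x + 1 (always the case on V_n). *)
Definition tau (n : nat) (v : word) : seq word :=
  let: (x, y, z) := v in
  if x != z then
    (0, x + 1 - y, n) :: nseq (z - x - 1) (1, 1, n) ++ nseq (n + 1 - z) (1, 1, n.+1)
  else
    (0, x + 1 - y, n.+1) :: nseq (n - z) (1, 1, n.+1).

From mathcomp Require Import all_boot.
From mathcomp Require Import zify.

Set Implicit Arguments.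
Unset Strict Implicit.
Unset Printing Implicit Defensive.

(* The first letter of tau_n(xyz) determines y (given x) and whether x = z; the
   length then recovers x and the number of letters ending in n recovers z. *)

Lemma inV_bounds (n x y z : nat) :
  1 <= n -> inV n (x, y, z) -> [/\ x <= n, x <= z, z <= n.+1 & y <= x.+1].
Proof. by move=> hn /and4P [? ? ? ?]; split; lia. Qed.

Lemma ohead_tau (n x y z : nat) :
  ohead (tau n (x, y, z)) = Some (0, x + 1 - y, if x == z then n.+1 else n).
Proof. by rewrite /tau; case: eqP. Qed.

Lemma size_tau (n x y z : nat) :
  x <= n -> x <= z -> z <= n.+1 -> size (tau n (x, y, z)) = n + 1 - x.
Proof.
move=> hxn hxz hzn; rewrite /tau; case: eqP => [<- | /eqP nxz] /=.
  by rewrite size_nseq; lia.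
by rewrite size_cat !size_nseq; lia.
Qed.

Lemma count_tau_last (n x y z : nat) : x <= z ->
  count (fun w : word => w.2 == n) (tau n (x, y, z)) = z - x.
Proof.
have neq_Sn : (n.+1 == n) = false by apply/eqP; lia.
move=> hxz; rewrite /tau; case: eqP => [<- | /eqP nxz] /=.
  by rewrite count_nseq /= neq_Sn; lia.
by rewrite count_cat !count_nseq /= eqxx neq_Sn; lia.
Qed.

Lemma tau_inj (n : nat) : 1 <= n -> {in inV n &, injective (tau n)}.
Proof.
move=> hn [[x y] z] [[x' y'] z'] hv hv' eq_tau.
have [xn xz zn yx] := inV_bounds hn hv.
have [xn' xz' zn' yx'] := inV_bounds hn hv'.
have ex : x = x'.
  by move: (size_tau y xn xz zn); rewrite eq_tau size_tau //; lia.
have ez : z = z'.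
  by move: (count_tau_last n y xz); rewrite eq_tau count_tau_last //; lia.
have e_mid : x + 1 - y = x' + 1 - y'.
  by move: (ohead_tau n x y z); rewrite eq_tau ohead_tau => -[].
have ey : y = y' by lia.
by rewrite ex ey ez.
Qed.

Theorem lemma5p1 (n : nat) (hn : 1 <= n) :
  (forall x y z : nat, inV n (x, y, z) ->
     [/\ size (tau n (x, y, z)) = n + 1 - x,
         ohead (tau n (x, y, z)) = Some (0, x + 1 - y, n)
           \/ ohead (tau n (x, y, z)) = Some (0, x + 1 - y, n.+1)
       & count (fun w : word => w.2 == n) (tau n (x, y, z)) = z - x])
  /\ (forall v w : word, inV n v -> inV n w -> tau n v = tau n w -> v = w).
Proof.
split; last exact: tau_inj.
move=> x y z hv; have [xn xz zn _] := inV_bounds hn hv.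
split; [exact: size_tau | | exact: count_tau_last].
by rewrite ohead_tau; case: eqP; [right | left].
Qed.
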